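(* Each of the following maps of $(q_1,p_1,q_2,p_2,t,s;\alpha_1,\dots,\alpha_6)$ is a Bäcklund transformation of the Hamiltonian system with Hamiltonians $H'_1,H'_2$, i.e. it sends solutions of that system with parameters $(\alpha_1,\dots,\alpha_6)$ to solutions of the same system with the indicated new parameters: $u_1$: $(q_1+\frac{\alpha_2}{p_1},p_1,q_2,p_2,t,s;\alpha_1+\alpha_2,-\alpha_2,\alpha_3,\alpha_4,\alpha_5,\alpha_6)$; $u_2$: $(q_1,p_1,q_2+\frac{\alpha_4}{p_2},p_2,t,s;\alpha_1+\alpha_4,\alpha_2,\alpha_3,-\alpha_4,\alpha_5,\alpha_6)$; $u_3$: with $B=q_1p_1+q_2p_2$: $\big(\frac{q_1(B-\alpha_1)}{B-\alpha_1-\alpha_3},\frac{p_1(B-\alpha_1-\alpha_3)}{B-\alpha_1},\frac{q_2(B-\alpha_1)}{B-\alpha_1-\alpha_3},\frac{p_2(B-\alpha_1-\alpha_3)}{B-\alpha_1},t,s;\alpha_1+\alpha_3,\alpha_2,-\alpha_3,\alpha_4,\alpha_5,\alpha_6\big)$; $u_4$: with $C=(q_1-1)p_1+(q_2-1)p_2$: $\big(\frac{(q_1-1)q_1p_1+(q_2-1)q_1p_2-\alpha_1q_1-\alpha_5}{C-\alpha_1-\alpha_5},\frac{(C-\alpha_1-\alpha_5)p_1}{C-\alpha_1},\frac{(q_1-1)p_1q_2+(q_2-1)q_2p_2-\alpha_1q_2-\alpha_5}{C-\alpha_1-\alpha_5},\frac{(C-\alpha_1-\alpha_5)p_2}{C-\alpha_1},t,s;\alpha_1+\alpha_5,\alpha_2,\alpha_3,\alpha_4,-\alpha_5,\alpha_6\big)$;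 $u_5$: with $D=(q_1-t)p_1+(q_2-s)p_2$: $\big(\frac{(q_1-t)q_1p_1+(q_2-s)q_1p_2-\alpha_1q_1-\alpha_6t}{D-\alpha_1-\alpha_6},\frac{(D-\alpha_1-\alpha_6)p_1}{D-\alpha_1},\frac{(q_1-t)p_1q_2+(q_2-s)q_2p_2-\alpha_1q_2-\alpha_6s}{D-\alpha_1-\alpha_6},\frac{(D-\alpha_1-\alpha_6)p_2}{D-\alpha_1},t,s;\alpha_1+\alpha_6,\alpha_2,\alpha_3,\alpha_4,\alpha_5,-\alpha_6\big)$; $\varphi_1$: $\big(\frac1{q_1},-(q_1p_1+\alpha_2)q_1,\frac1{q_2},-(q_2p_2+\alpha_4)q_2,\frac1t,\frac1s;-\alpha_1-\alpha_2-\alpha_3-\alpha_4,\alpha_2,\alpha_3,\alpha_4,1-\alpha_6,1-\alpha_5\big)$; $\varphi_2$: $(1-q_1,-p_1,1-q_2,-p_2,1-t,1-s;\alpha_1,\alpha_2,\alpha_5,\alpha_4,\alpha_3,\alpha_6)$; $\varphi_3$: $\big(\frac{t-q_1}{t-1},-(t-1)p_1,\frac{s-q_2}{s-1},-(s-1)p_2,\frac{t}{t-1},\frac{s}{s-1};\alpha_1,\alpha_2,\alpha_6,\alpha_4,\alpha_5,\alpha_3\big)$; $\varphi_4$: $\big(\frac{q_1}{t},tp_1,\frac{q_2}{s},sp_2,\frac1t,\frac1s;\alpha_1,\alpha_2,\alpha_3,\alpha_4,\alpha_6,\alpha_5\big)$; $\varphi_5$: $(q_2,p_2,q_1,p_1,s,t;\alpha_1,\alpha_4,\alpha_3,\alpha_2,\alpha_5,\alpha_6)$;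 $\varphi_6$: $\big(\frac{q_1}{q_2},p_1q_2,\frac1{q_2},-(q_2p_2+q_1p_1-\alpha_1)q_2,\frac{t}{s},\frac1s;\alpha_1,\alpha_2,\alpha_4,\alpha_3,\alpha_5,\alpha_6\big)$; $\varphi_7$: $\big(\frac{t}{q_1},-\frac{(q_1p_1+\alpha_2)q_1}{t},\frac{s}{q_2},-\frac{(q_2p_2+\alpha_4)q_2}{s},t,s;-\alpha_1-\alpha_2-\alpha_3-\alpha_4,\alpha_2,\alpha_3,\alpha_4,1-\alpha_5,1-\alpha_6\big)$; $\varphi_8$: $\big(\frac{(q_1-1)t}{q_1-t},-\frac{p_1(q_1-t)^2+\alpha_2(q_1-t)}{t(t-1)},\frac{(q_2-1)s}{q_2-s},-\frac{p_2(q_2-s)^2+\alpha_4(q_2-s)}{s(s-1)},t,s;\alpha_1+\alpha_3+\alpha_5-1,\alpha_2,1-\alpha_3,\alpha_4,1-\alpha_5,\alpha_6\big)$.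
   Context: Parameters $\alpha_1,\dots,\alpha_6\in\mathbb{C}$ with $2\alpha_1+\alpha_2+\dots+\alpha_6=1$. $H_{VI}(q,p,t;a_0,a_1,a_2,a_3,a_4)=\frac{1}{t(t-1)}\big[p^2(q-t)(q-1)q-\{(a_0-1)(q-1)q+a_3(q-t)q+a_4(q-t)(q-1)\}p+a_2(a_1+a_2)(q-t)\big]$. The system is $dq_j=\frac{\partial H'_1}{\partial p_j}dt+\frac{\partial H'_2}{\partial p_j}ds$, $dp_j=-\frac{\partial H'_1}{\partial q_j}dt-\frac{\partial H'_2}{\partial q_j}ds$ ($j=1,2$), where $H'_1=H_{VI}(q_1,p_1,t;\alpha_1+\alpha_4+\alpha_6,-\alpha_1-\alpha_2,\alpha_2,\alpha_1+\alpha_5,\alpha_1+\alpha_3)+\alpha_2\Big\{\frac{(s-1)q_2}{(t-1)(t-s)}-\frac{sq_1}{t(t-s)}+\frac{q_1q_2}{t(t-1)}\Big\}p_2+\alpha_4\frac{(q_1-q_2)p_1}{t-s}+\Big\{\frac{2(s-1)q_1q_2}{(t-1)(t-s)}-\frac{tq_2^2+sq_1^2}{t(t-s)}+\frac{(q_1^2+t)q_2}{t(t-1)}\Big\}p_1p_2$, and $H'_2$ obtained from $H'_1$ by $q_1\leftrightarrow q_2$, $p_1\leftrightarrow p_2$, $t\leftrightarrow s$, $\alpha_2\leftrightarrow\alpha_4$. Each listed tuple gives the images of $(q_1,p_1,q_2,p_2,t,s;\alpha_1,\dots,\alpha_6)$ in this order. *)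

From HB Require Import structures.
From mathcomp Require Import all_boot all_order all_algebra.
From mathcomp Require Import mpoly.
Set Implicit Arguments. Unset Strict Implicit. Unset Printing Implicit Defensive.
Import Order.TTheory GRing.Theory.
Local Open Scope ring_scope.

Record prm (K : Type) := Prm { al1 : K; al2 : K; al3 : K; al4 : K; al5 : K; al6 : K }.
Record state (K : Type) := St { sq1 : K; sp1 : K; sq2 : K; sp2 : K; st : K; ss : K }.

Section Ham.
Variable K : fieldType.
Local Notation P := {mpoly K[4]}.

(* H_VI(x,y,t; a0,...,a4) as a polynomial in the "variables" x (=q), y (=p). *)
Definition HVI (x y : P) (t a0 a1 a2 a3 a4 : K) : P :=
  (1 / (t * (t - 1))) *:
   (y ^+ 2 * (x - t%:MP) * (x - 1) * x
    - ((a0 - 1) *: ((x - 1) * x) + a3 *: ((x - t%:MP) * x)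
       + a4 *: ((x - t%:MP) * (x - 1))) * y
    + (a2 * (a1 + a2)) *: (x - t%:MP)).

(* H'_1 written with generic (q1,p1,q2,p2) and (t,s), alpha_2, alpha_4 in
   explicit positions, so that H'_2 is obtained by the swaps
   q1<->q2, p1<->p2, t<->s, alpha_2<->alpha_4. *)
Definition Hgen (q1 p1 q2 p2 : P) (t s a1 a2 a3 a4 a5 a6 : K) : P :=
  HVI q1 p1 t (a1 + a4 + a6) (- a1 - a2) a2 (a1 + a5) (a1 + a3)
  + a2 *: (((s - 1) / ((t - 1) * (t - s))) *: q2
           - (s / (t * (t - s))) *: q1
           + (1 / (t * (t - 1))) *: (q1 * q2)) * p2
  + (a4 / (t - s)) *: ((q1 - q2) * p1)
  + ((2 * (s - 1) / ((t - 1) * (t - s))) *: (q1 * q2)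
     - (1 / (t * (t - s))) *: (t *: q2 ^+ 2 + s *: q1 ^+ 2)
     + (1 / (t * (t - 1))) *: ((q1 ^+ 2 + t%:MP) * q2)) * p1 * p2.

Definition iq1 : 'I_4 := inord 0.
Definition ip1 : 'I_4 := inord 1.
Definition iq2 : 'I_4 := inord 2.
Definition ip2 : 'I_4 := inord 3.

Definition H1 (t s : K) (a : prm K) : P :=
  Hgen 'X_iq1 'X_ip1 'X_iq2 'X_ip2 t s (al1 a) (al2 a) (al3 a) (al4 a) (al5 a) (al6 a).
Definition H2 (t s : K) (a : prm K) : P :=
  Hgen 'X_iq2 'X_ip2 'X_iq1 'X_ip1 s t (al1 a) (al4 a) (al3 a) (al2 a) (al5 a) (al6 a).

Definition env (x : state K) : 'I_4 -> K :=
  fun i => nth 0 [:: sq1 x; sp1 x; sq2 x; sp2 x] i.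

(* (q1,p1,q2,p2) (elements of a differential field with derivations dt = d/dt,
   ds = d/ds, independent variables t = st x, s = ss x) solve the system. *)
Definition sol (dt ds : K -> K) (x : state K) (a : prm K) : Prop :=
  let h1 := H1 (st x) (ss x) a in
  let h2 := H2 (st x) (ss x) a in
  let e := env x in
  [/\ dt (sq1 x) = (h1^`M(ip1)).@[e], ds (sq1 x) = (h2^`M(ip1)).@[e],
      dt (sq2 x) = (h1^`M(ip2)).@[e] & ds (sq2 x) = (h2^`M(ip2)).@[e]] /\
  [/\ dt (sp1 x) = - (h1^`M(iq1)).@[e], ds (sp1 x) = - (h2^`M(iq1)).@[e],
      dt (sp2 x) = - (h1^`M(iq2)).@[e] & ds (sp2 x) = - (h2^`M(iq2)).@[e]].

Definition is_derivation (d : K -> K) : Prop :=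
  (forall u v, d (u + v) = d u + d v) /\ (forall u v, d (u * v) = d u * v + u * d v).

(* Derivations d/dT, d/dS w.r.t. new independent variables T, S (elements of K),
   determined by the chain rule  d/dt = T_t d/dT + S_t d/dS,
   d/ds = T_s d/dT + S_s d/dS. *)
Definition jac (dt ds : K -> K) (T S : K) : K := dt T * ds S - dt S * ds T.
Definition newdT (dt ds : K -> K) (T S : K) (f : K) : K :=
  (ds S * dt f - dt S * ds f) / jac dt ds T S.
Definition newdS (dt ds : K -> K) (T S : K) (f : K) : K :=
  (dt T * ds f - ds T * dt f) / jac dt ds T S.

Definition is_constant (dt ds : K -> K) (c : K) : Prop := dt c = 0 /\ ds c = 0.

Definition param_rel (a : prm K) : Prop :=
  2 * al1 a + al2 a + al3 a + al4 a + al5 a + al6 a = 1.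

End Ham.

(* A map m (with nondegeneracy condition nd expressing that its denominators
   are nonzero) is a Backlund transformation: it sends every solution with
   parameters a to a solution (w.r.t. the new independent variables) with the
   new parameters. *)
Definition backlund
  (m : forall K : fieldType, state K -> prm K -> state K * prm K)
  (nd : forall K : fieldType, state K -> prm K -> Prop) : Prop :=
  forall (K : fieldType) (dt ds : K -> K) (x : state K) (a : prm K),
    is_derivation dt -> is_derivation ds ->
    dt (st x) = 1 -> ds (st x) = 0 -> dt (ss x) = 0 -> ds (ss x) = 1 ->
    is_constant dt ds (al1 a) -> is_constant dt ds (al2 a) ->
    is_constant dt ds (al3 a) -> is_constant dt ds (al4 a) ->
    is_constant dt ds (al5 a) -> is_constant dt ds (al6 a) ->
    param_rel a ->
    nd K x a ->
    sol dt ds x a ->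
    sol (newdT dt ds (st (m K x a).1) (ss (m K x a).1))
        (newdS dt ds (st (m K x a).1) (ss (m K x a).1)) (m K x a).1 (m K x a).2.

Section Maps.
Variable K : fieldType.
Implicit Types (x : state K) (a : prm K).

Definition u1 x a := (St (sq1 x + al2 a / sp1 x) (sp1 x) (sq2 x) (sp2 x) (st x) (ss x),
  Prm (al1 a + al2 a) (- al2 a) (al3 a) (al4 a) (al5 a) (al6 a)).
Definition nd_u1 x a := sp1 x != 0.

Definition u2 x a := (St (sq1 x) (sp1 x) (sq2 x + al4 a / sp2 x) (sp2 x) (st x) (ss x),
  Prm (al1 a + al4 a) (al2 a) (al3 a) (- al4 a) (al5 a) (al6 a)).
Definition nd_u2 x a := sp2 x != 0.

Definition Bf x := sq1 x * sp1 x + sq2 x * sp2 x.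
Definition u3 x a :=
  let B := Bf x in
  (St (sq1 x * (B - al1 a) / (B - al1 a - al3 a)) (sp1 x * (B - al1 a - al3 a) / (B - al1 a))
      (sq2 x * (B - al1 a) / (B - al1 a - al3 a)) (sp2 x * (B - al1 a - al3 a) / (B - al1 a))
      (st x) (ss x),
   Prm (al1 a + al3 a) (al2 a) (- al3 a) (al4 a) (al5 a) (al6 a)).
Definition nd_u3 x a := Bf x - al1 a - al3 a != 0 /\ Bf x - al1 a != 0.

Definition Cf x := (sq1 x - 1) * sp1 x + (sq2 x - 1) * sp2 x.
Definition u4 x a :=
  let C := Cf x in
  (St (((sq1 x - 1) * sq1 x * sp1 x + (sq2 x - 1) * sq1 x * sp2 x - al1 a * sq1 x - al5 a)
         / (C - al1 a - al5 a))
      ((C - al1 a - al5 a) * sp1 x / (C - al1 a))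
      (((sq1 x - 1) * sp1 x * sq2 x + (sq2 x - 1) * sq2 x * sp2 x - al1 a * sq2 x - al5 a)
         / (C - al1 a - al5 a))
      ((C - al1 a - al5 a) * sp2 x / (C - al1 a))
      (st x) (ss x),
   Prm (al1 a + al5 a) (al2 a) (al3 a) (al4 a) (- al5 a) (al6 a)).
Definition nd_u4 x a := Cf x - al1 a - al5 a != 0 /\ Cf x - al1 a != 0.

Definition Df x := (sq1 x - st x) * sp1 x + (sq2 x - ss x) * sp2 x.
Definition u5 x a :=
  let D := Df x in
  (St (((sq1 x - st x) * sq1 x * sp1 x + (sq2 x - ss x) * sq1 x * sp2 x - al1 a * sq1 x
          - al6 a * st x) / (D - al1 a - al6 a))
      ((D - al1 a - al6 a) * sp1 x / (D - al1 a))
      (((sq1 x - st x) * sp1 x * sq2 x + (sq2 x - ss x) * sq2 x * sp2 x - al1 a * sq2 x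
          - al6 a * ss x) / (D - al1 a - al6 a))
      ((D - al1 a - al6 a) * sp2 x / (D - al1 a))
      (st x) (ss x),
   Prm (al1 a + al6 a) (al2 a) (al3 a) (al4 a) (al5 a) (- al6 a)).
Definition nd_u5 x a := Df x - al1 a - al6 a != 0 /\ Df x - al1 a != 0.

Definition phi1 x a :=
  (St (1 / sq1 x) (- (sq1 x * sp1 x + al2 a) * sq1 x)
      (1 / sq2 x) (- (sq2 x * sp2 x + al4 a) * sq2 x)
      (1 / st x) (1 / ss x),
   Prm (- al1 a - al2 a - al3 a - al4 a) (al2 a) (al3 a) (al4 a) (1 - al6 a) (1 - al5 a)).
Definition nd_phi1 x (a : prm K) := sq1 x != 0 /\ sq2 x != 0.

Definition phi2 x a :=
  (St (1 - sq1 x) (- sp1 x) (1 - sq2 x) (- sp2 x) (1 - st x) (1 - ss x),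
   Prm (al1 a) (al2 a) (al5 a) (al4 a) (al3 a) (al6 a)).
Definition nd_phi2 (x : state K) (a : prm K) := True.

Definition phi3 x a :=
  (St ((st x - sq1 x) / (st x - 1)) (- (st x - 1) * sp1 x)
      ((ss x - sq2 x) / (ss x - 1)) (- (ss x - 1) * sp2 x)
      (st x / (st x - 1)) (ss x / (ss x - 1)),
   Prm (al1 a) (al2 a) (al6 a) (al4 a) (al5 a) (al3 a)).
Definition nd_phi3 (x : state K) (a : prm K) := True.

Definition phi4 x a :=
  (St (sq1 x / st x) (st x * sp1 x) (sq2 x / ss x) (ss x * sp2 x) (1 / st x) (1 / ss x),
   Prm (al1 a) (al2 a) (al3 a) (al4 a) (al6 a) (al5 a)).
Definition nd_phi4 (x : state K) (a : prm K) := True.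

Definition phi5 x a :=
  (St (sq2 x) (sp2 x) (sq1 x) (sp1 x) (ss x) (st x),
   Prm (al1 a) (al4 a) (al3 a) (al2 a) (al5 a) (al6 a)).
Definition nd_phi5 (x : state K) (a : prm K) := True.

Definition phi6 x a :=
  (St (sq1 x / sq2 x) (sp1 x * sq2 x) (1 / sq2 x)
      (- (sq2 x * sp2 x + sq1 x * sp1 x - al1 a) * sq2 x)
      (st x / ss x) (1 / ss x),
   Prm (al1 a) (al2 a) (al4 a) (al3 a) (al5 a) (al6 a)).
Definition nd_phi6 x (a : prm K) := sq2 x != 0.

Definition phi7 x a :=
  (St (st x / sq1 x) (- ((sq1 x * sp1 x + al2 a) * sq1 x) / st x)
      (ss x / sq2 x) (- ((sq2 x * sp2 x + al4 a) * sq2 x) / ss x)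
      (st x) (ss x),
   Prm (- al1 a - al2 a - al3 a - al4 a) (al2 a) (al3 a) (al4 a) (1 - al5 a) (1 - al6 a)).
Definition nd_phi7 x (a : prm K) := sq1 x != 0 /\ sq2 x != 0.

Definition phi8 x a :=
  (St ((sq1 x - 1) * st x / (sq1 x - st x))
      (- (sp1 x * (sq1 x - st x) ^+ 2 + al2 a * (sq1 x - st x)) / (st x * (st x - 1)))
      ((sq2 x - 1) * ss x / (sq2 x - ss x))
      (- (sp2 x * (sq2 x - ss x) ^+ 2 + al4 a * (sq2 x - ss x)) / (ss x * (ss x - 1)))
      (st x) (ss x),
   Prm (al1 a + al3 a + al5 a - 1) (al2 a) (1 - al3 a) (al4 a) (1 - al5 a) (al6 a)).
Definition nd_phi8 x (a : prm K) := sq1 x - st x != 0 /\ sq2 x - ss x != 0.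

End Maps.

(** Every claim is a finite computation.  Differentiating [Hgen] once,
    symbolically, turns the Hamiltonian system into explicit formulas for the
    [t]- and [s]-derivatives of [q1, p1, q2, p2].  At a transformed point the
    new derivations come from [dt], [ds] by the chain rule ([newdT], [newdS]);
    the Leibniz rule reduces them to derivatives of the old coordinates, and
    the explicit formulas turn each of the eight new equations of motion into a
    rational identity in [q1, p1, q2, p2, t, s, a1, ..., a5], with [a6]
    eliminated through the parameter relation.  [field] checks these
    identities; its side conditions are the nondegeneracy hypotheses and
    [t, s, t - 1, s - 1, t - s <> 0], which hold because [t] and [s] are
    independent variables. *)
From HB Require Import structures.
From mathcomp Require Import all_boot all_order all_algebra.
From mathcomp Require Import mpoly ring.
Set Implicit Arguments. Unset Strict Implicit. Unset Printing Implicit Defensive.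
Import Order.TTheory GRing.Theory.
Local Open Scope ring_scope.

Section Derivation.
Variables (K : fieldType) (d : K -> K).
Hypothesis d_derivation : is_derivation d.

Lemma derivationD u v : d (u + v) = d u + d v.
Proof. exact: d_derivation.1. Qed.

Lemma derivationM u v : d (u * v) = d u * v + u * d v.
Proof. exact: d_derivation.2. Qed.

Lemma derivation0 : d 0 = 0.
Proof. by apply: (addIr (d 0)); rewrite -derivationD !addr0 add0r. Qed.

Lemma derivationN u : d (- u) = - d u.
Proof. by apply/eqP; rewrite -addr_eq0 -derivationD addNr derivation0. Qed.

Lemma derivation1 : d 1 = 0.
Proof.
by apply: (addIr (d 1)); rewrite add0r -{3}[1](mul1r 1) derivationM mul1r mulr1.
Qed.

Lemma derivationV u : d u^-1 = - d u * u^-1 ^+ 2.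
Proof.
have [->|u_neq0] := eqVneq u 0; first by rewrite invr0 derivation0 expr0n /= mulr0.
have := derivationM u u^-1; rewrite mulfV // derivation1 => /esym/eqP.
rewrite addrC addr_eq0 => /eqP du_inv.
by apply: (mulfI u_neq0); rewrite du_inv; field.
Qed.

Lemma derivationX2 u : d (u ^+ 2) = 2 * u * d u.
Proof. by rewrite expr2 derivationM; ring. Qed.

Lemma derivation_subr_neq0 u c : d u = 1 -> d c = 0 -> u - c != 0.
Proof.
move=> du dc; apply/eqP => u_eq_c.
have := derivationD (u - c) c; rewrite subrK u_eq_c derivation0 dc addr0 du.
by move/eqP; rewrite oner_eq0.
Qed.

Lemma derivation_neq0 u : d u = 1 -> u != 0.
Proof. by move=> du; have := derivation_subr_neq0 du derivation0; rewrite subr0. Qed.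

End Derivation.

Lemma independent_variables_neq0 (K : fieldType) (dt ds : K -> K) t s :
  is_derivation dt -> is_derivation ds ->
  dt t = 1 -> ds t = 0 -> dt s = 0 -> ds s = 1 ->
  [/\ t != 0, t - 1 != 0, t - s != 0, s != 0 & (s - 1 != 0 /\ s - t != 0)].
Proof.
move=> dt_der ds_der dtt dst dts dss.
rewrite (derivation_neq0 dt_der dtt) (derivation_neq0 ds_der dss).
rewrite (derivation_subr_neq0 dt_der dtt (derivation1 dt_der)).
rewrite (derivation_subr_neq0 ds_der dss (derivation1 ds_der)).
by rewrite (derivation_subr_neq0 dt_der dtt dts) (derivation_subr_neq0 ds_der dss dst).
Qed.

Lemma param_rel_al6 (K : fieldType) (a : prm K) :
  param_rel a -> al6 a = 1 - 2 * al1 a - al2 a - al3 a - al4 a - al5 a.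
Proof. by move=> rel; rewrite -[X in X - 2 * _]rel; ring. Qed.

Section MPolyDerivVar.
Context (n : nat) (R : nzRingType).

Lemma mderivX_var (i j : 'I_n) : ('X_i : {mpoly R[n]})^`M(j) = (i == j)%:R%:MP.
Proof.
rewrite mderivX mnm1E; case: eqP => [->|_]; last by rewrite scale0r mpolyC0.
have -> : (U_(j) - U_(j) = 0)%MM by apply/mnmP => k; rewrite mnmBE subnn mnm0E.
by rewrite mpolyX0 scale1r mpolyC1.
Qed.

Lemma mderiv1 (j : 'I_n) : (1 : {mpoly R[n]})^`M(j) = 0.
Proof. by rewrite -mpolyC1 mderivC. Qed.

End MPolyDerivVar.

Section Hamiltonian.
Variable K : fieldType.

Definition HVI_factor (t : K) := 1 / (t * (t - 1)).

Definition HVI_dq (x y t a0 a1 a2 a3 a4 : K) : K :=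
  HVI_factor t * (y ^+ 2 * ((x - 1) * x + (x - t) * x + (x - t) * (x - 1))
   - ((a0 - 1) * (2 * x - 1) + a3 * (2 * x - t) + a4 * (2 * x - t - 1)) * y
   + a2 * (a1 + a2)).

Definition HVI_dp (x y t a0 a1 a2 a3 a4 : K) : K :=
  HVI_factor t * (2 * y * (x - t) * (x - 1) * x
   - ((a0 - 1) * (x - 1) * x + a3 * (x - t) * x + a4 * (x - t) * (x - 1))).

Definition Hgen_coef_p2 (q1 q2 t s : K) :=
  (s - 1) / ((t - 1) * (t - s)) * q2 - s / (t * (t - s)) * q1 + HVI_factor t * (q1 * q2).

Definition Hgen_coef_p1p2 (q1 q2 t s : K) :=
  2 * (s - 1) / ((t - 1) * (t - s)) * (q1 * q2)
  - 1 / (t * (t - s)) * (t * q2 ^+ 2 + s * q1 ^+ 2) + HVI_factor t * ((q1 ^+ 2 + t) * q2).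

Definition Hgen_dq1 (q1 p1 q2 p2 t s a1 a2 a3 a4 a5 a6 : K) : K :=
  HVI_dq q1 p1 t (a1 + a4 + a6) (- a1 - a2) a2 (a1 + a5) (a1 + a3)
  + a2 * (- (s / (t * (t - s))) + HVI_factor t * q2) * p2 + a4 / (t - s) * p1
  + (2 * (s - 1) / ((t - 1) * (t - s)) * q2 - 1 / (t * (t - s)) * (s * (2 * q1))
     + HVI_factor t * (2 * q1 * q2)) * p1 * p2.

Definition Hgen_dp1 (q1 p1 q2 p2 t s a1 a2 a3 a4 a5 a6 : K) : K :=
  HVI_dp q1 p1 t (a1 + a4 + a6) (- a1 - a2) a2 (a1 + a5) (a1 + a3)
  + a4 / (t - s) * (q1 - q2) + Hgen_coef_p1p2 q1 q2 t s * p2.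

Definition Hgen_dq2 (q1 p1 q2 p2 t s a1 a2 a3 a4 a5 a6 : K) : K :=
  a2 * ((s - 1) / ((t - 1) * (t - s)) + HVI_factor t * q1) * p2 - a4 / (t - s) * p1
  + (2 * (s - 1) / ((t - 1) * (t - s)) * q1 - 1 / (t * (t - s)) * (t * (2 * q2))
     + HVI_factor t * (q1 ^+ 2 + t)) * p1 * p2.

Definition Hgen_dp2 (q1 p1 q2 p2 t s a1 a2 a3 a4 a5 a6 : K) : K :=
  a2 * Hgen_coef_p2 q1 q2 t s + Hgen_coef_p1p2 q1 q2 t s * p1.

Lemma mderiv_Hgen (i0 i1 i2 i3 j : 'I_4) (v : 'I_4 -> K) t s a1 a2 a3 a4 a5 a6 :
  (Hgen 'X_i0 'X_i1 'X_i2 'X_i3 t s a1 a2 a3 a4 a5 a6)^`M(j).@[v] =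
  (i0 == j)%:R * Hgen_dq1 (v i0) (v i1) (v i2) (v i3) t s a1 a2 a3 a4 a5 a6
  + (i1 == j)%:R * Hgen_dp1 (v i0) (v i1) (v i2) (v i3) t s a1 a2 a3 a4 a5 a6
  + (i2 == j)%:R * Hgen_dq2 (v i0) (v i1) (v i2) (v i3) t s a1 a2 a3 a4 a5 a6
  + (i3 == j)%:R * Hgen_dp2 (v i0) (v i1) (v i2) (v i3) t s a1 a2 a3 a4 a5 a6.
Proof.
rewrite /Hgen /HVI !expr2.
rewrite !(mderivD, mderivB, mderivN, mderivM, mderivZ, mderivX_var, mderivC, mderiv1).
rewrite !(mevalD, mevalB, mevalN, mevalM, mevalZ, mevalXU, mevalC, meval1, meval0).
rewrite /Hgen_dq1 /Hgen_dp1 /Hgen_dq2 /Hgen_dp2 /HVI_dq /HVI_dp.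
by rewrite /Hgen_coef_p2 /Hgen_coef_p1p2 /HVI_factor; ring.
Qed.

Lemma envE (x : state K) :
  [/\ env x iq1 = sq1 x, env x ip1 = sp1 x, env x iq2 = sq2 x & env x ip2 = sp2 x].
Proof. by rewrite /env /iq1 /ip1 /iq2 /ip2 !inordK. Qed.

Lemma coord_indices_uniq : uniq [:: iq1; ip1; iq2; ip2].
Proof. by rewrite /= !inE -!val_eqE /= !inordK. Qed.

Lemma sol_explicitE dt ds q1 p1 q2 p2 t s a1 a2 a3 a4 a5 a6 :
  sol dt ds (St q1 p1 q2 p2 t s) (Prm a1 a2 a3 a4 a5 a6) <->
  ([/\ dt q1 = Hgen_dp1 q1 p1 q2 p2 t s a1 a2 a3 a4 a5 a6,
       ds q1 = Hgen_dp2 q2 p2 q1 p1 s t a1 a4 a3 a2 a5 a6,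
       dt q2 = Hgen_dp2 q1 p1 q2 p2 t s a1 a2 a3 a4 a5 a6 &
       ds q2 = Hgen_dp1 q2 p2 q1 p1 s t a1 a4 a3 a2 a5 a6] /\
   [/\ dt p1 = - Hgen_dq1 q1 p1 q2 p2 t s a1 a2 a3 a4 a5 a6,
       ds p1 = - Hgen_dq2 q2 p2 q1 p1 s t a1 a4 a3 a2 a5 a6,
       dt p2 = - Hgen_dq2 q1 p1 q2 p2 t s a1 a2 a3 a4 a5 a6 &
       ds p2 = - Hgen_dq1 q2 p2 q1 p1 s t a1 a4 a3 a2 a5 a6]).
Proof.
have [e1 e2 e3 e4] := envE (St q1 p1 q2 p2 t s).
move: coord_indices_uniq; rewrite /= !inE !negb_or => /and4P[/and3P[n1 n2 n3] /andP[n4 n5] n6 _].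
rewrite /sol /H1 /H2 /= !mderiv_Hgen e1 e2 e3 e4 !eqxx.
have neq_sym (i j : 'I_4) : i != j -> (j == i) = false by rewrite eq_sym => /negbTE.
rewrite !(negbTE n1, negbTE n2, negbTE n3, negbTE n4, negbTE n5, negbTE n6).
rewrite !(neq_sym _ _ n1, neq_sym _ _ n2, neq_sym _ _ n3, neq_sym _ _ n4, neq_sym _ _ n5,
          neq_sym _ _ n6) /=.
by rewrite !mul0r !mul1r !add0r !addr0.
Qed.

End Hamiltonian.

Lemma neq0_of_eq (K : fieldType) (x y : K) : y != 0 -> x = y -> x != 0.
Proof. by move=> ? ->. Qed.

Lemma neq0_of_eq_opp (K : fieldType) (x y : K) : y != 0 -> x = - y -> x != 0.
Proof. by move=> ? ->; rewrite oppr_eq0. Qed.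

Ltac neq0_factors :=
  match goal with
  | |- is_true true => done
  | |- is_true (?e != 0) =>
    first [ exact: oner_neq0
          | solve [apply: (neq0_of_eq_opp (oner_neq0 _)); ring]
          | solve [apply: (neq0_of_eq (oner_neq0 _)); ring]
          | match goal with H : is_true (?y != 0) |- _ =>
              solve [apply: (neq0_of_eq H); ring | apply: (neq0_of_eq_opp H); ring] end
          | match e with
            | _ * _ => apply: mulf_neq0; neq0_factors
            | - _ => rewrite oppr_eq0; neq0_factors
            | _ ^+ _ => apply: expf_neq0; neq0_factors
            | _^-1 => rewrite invr_eq0; neq0_factors
            end ]
  end.

Ltac push_derivation d_der :=
  rewrite ?(derivationD d_der, derivationN d_der, derivationM d_der, derivationV d_der,
            derivationX2 d_der, derivation1 d_der, derivation0 d_der).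

Section Transformations.
Variables (K : fieldType) (dt ds : K -> K).
Hypotheses (dt_der : is_derivation dt) (ds_der : is_derivation ds).
Variables q1 p1 q2 p2 t s a1 a2 a3 a4 a5 : K.
Local Notation a6 := (1 - 2 * a1 - a2 - a3 - a4 - a5).

Hypotheses (dtt : dt t = 1) (dst : ds t = 0) (dts : dt s = 0) (dss : ds s = 1).
Hypotheses (a1_const : is_constant dt ds a1) (a2_const : is_constant dt ds a2)
  (a3_const : is_constant dt ds a3) (a4_const : is_constant dt ds a4)
  (a5_const : is_constant dt ds a5).
Hypotheses
  (dtq1 : dt q1 = Hgen_dp1 q1 p1 q2 p2 t s a1 a2 a3 a4 a5 a6)
  (dsq1 : ds q1 = Hgen_dp2 q2 p2 q1 p1 s t a1 a4 a3 a2 a5 a6)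
  (dtq2 : dt q2 = Hgen_dp2 q1 p1 q2 p2 t s a1 a2 a3 a4 a5 a6)
  (dsq2 : ds q2 = Hgen_dp1 q2 p2 q1 p1 s t a1 a4 a3 a2 a5 a6)
  (dtp1 : dt p1 = - Hgen_dq1 q1 p1 q2 p2 t s a1 a2 a3 a4 a5 a6)
  (dsp1 : ds p1 = - Hgen_dq2 q2 p2 q1 p1 s t a1 a4 a3 a2 a5 a6)
  (dtp2 : dt p2 = - Hgen_dq2 q1 p1 q2 p2 t s a1 a2 a3 a4 a5 a6)
  (dsp2 : ds p2 = - Hgen_dq1 q2 p2 q1 p1 s t a1 a4 a3 a2 a5 a6).

Local Notation x := (St q1 p1 q2 p2 t s).
Local Notation a := (Prm a1 a2 a3 a4 a5 a6).

Ltac transformed_sol_by_field nd :=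
  have [? ? ? ? [? ?]] := independent_variables_neq0 dt_der ds_der dtt dst dts dss;
  unfold nd, Bf, Cf, Df; rewrite /=;
  lazymatch goal with |- _ /\ _ -> _ => case=> ? ? | _ => move=> ? end;
  rewrite /= sol_explicitE /newdT /newdS /jac /Bf /Cf /Df /=;
  push_derivation dt_der; push_derivation ds_der;
  rewrite ?dtt ?dst ?dts ?dss ?dtq1 ?dsq1 ?dtq2 ?dsq2 ?dtp1 ?dsp1 ?dtp2 ?dsp2;
  rewrite ?(a1_const.1, a1_const.2, a2_const.1, a2_const.2, a3_const.1, a3_const.2,
            a4_const.1, a4_const.2, a5_const.1, a5_const.2);
  rewrite /Hgen_dq1 /Hgen_dp1 /Hgen_dq2 /Hgen_dp2;
  rewrite /HVI_dq /HVI_dp /Hgen_coef_p2 /Hgen_coef_p1p2 /HVI_factor;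
  split; split; field; repeat (apply/andP; split); neq0_factors.

Local Notation transformed_sol m :=
  (sol (newdT dt ds (st (m K x a).1) (ss (m K x a).1))
       (newdS dt ds (st (m K x a).1) (ss (m K x a).1)) (m K x a).1 (m K x a).2).

Lemma u1_sol : nd_u1 x a -> transformed_sol u1.
Proof. transformed_sol_by_field nd_u1. Qed.

Lemma u2_sol : nd_u2 x a -> transformed_sol u2.
Proof. transformed_sol_by_field nd_u2. Qed.

Lemma u3_sol : nd_u3 x a -> transformed_sol u3.
Proof. transformed_sol_by_field nd_u3. Qed.

Lemma u4_sol : nd_u4 x a -> transformed_sol u4.
Proof. transformed_sol_by_field nd_u4. Qed.

Lemma u5_sol : nd_u5 x a -> transformed_sol u5.
Proof. transformed_sol_by_field nd_u5. Qed.

Lemma phi1_sol : nd_phi1 x a -> transformed_sol phi1.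
Proof. transformed_sol_by_field nd_phi1. Qed.

Lemma phi2_sol : nd_phi2 x a -> transformed_sol phi2.
Proof. transformed_sol_by_field nd_phi2. Qed.

Lemma phi3_sol : nd_phi3 x a -> transformed_sol phi3.
Proof. transformed_sol_by_field nd_phi3. Qed.

Lemma phi4_sol : nd_phi4 x a -> transformed_sol phi4.
Proof. transformed_sol_by_field nd_phi4. Qed.

Lemma phi5_sol : nd_phi5 x a -> transformed_sol phi5.
Proof. transformed_sol_by_field nd_phi5. Qed.

Lemma phi6_sol : nd_phi6 x a -> transformed_sol phi6.
Proof. transformed_sol_by_field nd_phi6. Qed.

Lemma phi7_sol : nd_phi7 x a -> transformed_sol phi7.
Proof. transformed_sol_by_field nd_phi7. Qed.

Lemma phi8_sol : nd_phi8 x a -> transformed_sol phi8.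
Proof. transformed_sol_by_field nd_phi8. Qed.

End Transformations.

Ltac backlund_of transformed_sol_lemma :=
  move=> K dt ds [q1 p1 q2 p2 t s] [a1 a2 a3 a4 a5 a6] ? ? /= ? ? ? ? ? ? ? ? ? _
    /param_rel_al6 /= -> ?;
  rewrite sol_explicitE => -[[? ? ? ?] [? ? ? ?]]; apply: transformed_sol_lemma => //.

Lemma backlund_u1 : backlund u1 nd_u1. Proof. backlund_of u1_sol. Qed.
Lemma backlund_u2 : backlund u2 nd_u2. Proof. backlund_of u2_sol. Qed.
Lemma backlund_u3 : backlund u3 nd_u3. Proof. backlund_of u3_sol. Qed.
Lemma backlund_u4 : backlund u4 nd_u4. Proof. backlund_of u4_sol. Qed.
Lemma backlund_u5 : backlund u5 nd_u5. Proof. backlund_of u5_sol. Qed.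
Lemma backlund_phi1 : backlund phi1 nd_phi1. Proof. backlund_of phi1_sol. Qed.
Lemma backlund_phi2 : backlund phi2 nd_phi2. Proof. backlund_of phi2_sol. Qed.
Lemma backlund_phi3 : backlund phi3 nd_phi3. Proof. backlund_of phi3_sol. Qed.
Lemma backlund_phi4 : backlund phi4 nd_phi4. Proof. backlund_of phi4_sol. Qed.
Lemma backlund_phi5 : backlund phi5 nd_phi5. Proof. backlund_of phi5_sol. Qed.
Lemma backlund_phi6 : backlund phi6 nd_phi6. Proof. backlund_of phi6_sol. Qed.
Lemma backlund_phi7 : backlund phi7 nd_phi7. Proof. backlund_of phi7_sol. Qed.
Lemma backlund_phi8 : backlund phi8 nd_phi8. Proof. backlund_of phi8_sol. Qed.

Theorem mainTheorem9 :
  [/\ backlund u1 nd_u1, backlund u2 nd_u2, backlund u3 nd_u3,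
      backlund u4 nd_u4 & backlund u5 nd_u5] /\
  [/\ backlund phi1 nd_phi1, backlund phi2 nd_phi2, backlund phi3 nd_phi3 &
      backlund phi4 nd_phi4] /\
  [/\ backlund phi5 nd_phi5, backlund phi6 nd_phi6,
      backlund phi7 nd_phi7 & backlund phi8 nd_phi8].
Proof.
split; first by split; [exact: backlund_u1 | exact: backlund_u2 | exact: backlund_u3
                       | exact: backlund_u4 | exact: backlund_u5].
split; first by split; [exact: backlund_phi1 | exact: backlund_phi2 | exact: backlund_phi3
                       | exact: backlund_phi4].
by split; [exact: backlund_phi5 | exact: backlund_phi6 | exact: backlund_phi7
          | exact: backlund_phi8].
Qed.
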